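(* Suppose there exists $C\ge0$ such that $d_{\mathcal{X}}(f(x,u),x_* )\le C(1+d_{\mathcal{X}}(x,x_* ))$ for all $x\in\mathcal{X}$ and $u\in\mathcal{U}$. Then $F(\underline{\mathcal{X}}\times\underline{\mathcal{U}})\subseteq\underline{\mathcal{X}}$ and the restriction $F:\underline{\mathcal{X}}\times\underline{\mathcal{U}}\to\underline{\mathcal{X}}$ is continuous.
   Context: $\mathbb{Z}_-=\{\dots,-2,-1\}$. $\mathcal{Z},\mathcal{U}$ are Polish spaces, $(\mathcal{X},d_{\mathcal{X}})$ is a Polish space with a complete metric, and $f:\mathcal{X}\times\mathcal{U}\to\mathcal{X}$ is continuous. $\underline{\mathcal{Z}}=\mathcal{Z}^{\mathbb{Z}_-}$ with the product topology; $V:\underline{\mathcal{Z}}\to\mathcal{U}^{\mathbb{Z}_-}$ is continuous and causal, and $\underline{\mathcal{U}}=V(\underline{\mathcal{Z}})$ carries the subspace topology of the product topology on $\mathcal{U}^{\mathbb{Z}_-}$. $\mathbf{w}=(w_t)_{t\le-1}\subseteq(0,1)$ is monotone with $\sum_tw_t=1$ and $|\mathbf{w}|:=\sup_{n\ge1}(\sup_{t\le-1}w_t/w_{t-n})^{1/n}<\infty$. Fix $x_*\in\mathcal{X}$. $\underline{\mathcal{X}}=\{\mathbf{x}\in\mathcal{X}^{\mathbb{Z}_-}:\sum_tw_td_{\mathcal{X}}(x_t,x_* )<\infty\}$ with metric $d_{\underline{\mathcal{X}}}(\mathbf{x}^1,\mathbf{x}^2)=\sum_tw_td_{\mathcal{X}}(x^1_t,x^2_t)$.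 $F:\mathcal{X}^{\mathbb{Z}_-}\times\mathcal{U}^{\mathbb{Z}_-}\to\mathcal{X}^{\mathbb{Z}_-}$ is given by $F(\mathbf{x},\mathbf{u})_t=f(x_{t-1},u_t)$. $\underline{\mathcal{X}}\times\underline{\mathcal{U}}$ carries the product of the $d_{\underline{\mathcal{X}}}$-topology and the topology of $\underline{\mathcal{U}}$. *)

From HB Require Import structures.
From mathcomp Require Import all_boot all_order all_algebra.
From mathcomp Require Import all_classical all_reals all_analysis.
Set Implicit Arguments. Unset Strict Implicit. Unset Printing Implicit Defensive.
Import Order.TTheory GRing.Theory Num.Theory.
Import numFieldNormedType.Exports.
Local Open Scope classical_set_scope.
Local Open Scope ring_scope.

(* Time convention: the index set Z_- = {..., -2, -1} is encoded by nat,
   k : nat standing for the time t = -(k+1).  Hence t-1 corresponds to k.+1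
   and "s <= t" corresponds to "k_t <= k_s". *)

Definition separable_space (T : topologicalType) : Prop :=
  exists D : set T, countable D /\ dense D.

Definition complete_compatible_metric (R : realType) (T : topologicalType)
  (d : T -> T -> R) : Prop :=
  (forall x y, 0 <= d x y) /\
      (forall x y, d x y = 0 <-> x = y) /\
      (forall x y, d x y = d y x) /\
      (forall x y z, d x z <= d x y + d y z) /\
      (forall (x : T) (A : set T),
          nbhs x A <-> (exists2 e : R, 0 < e & [set y | d x y < e] `<=` A)) /\
    (forall u : nat -> T,
        (forall e : R, 0 < e -> exists N : nat, forall m n : nat,
            (N <= m)%N -> (N <= n)%N -> d (u m) (u n) < e) ->
        exists l : T, forall e : R, 0 < e -> exists N : nat, forall n : nat,
            (N <= n)%N -> d l (u n) < e).

Definition polish (R : realType) (T : topologicalType) : Prop :=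
  separable_space T /\ exists d : T -> T -> R, complete_compatible_metric d.

Definition mdist_complete (R : realType) (X : metricType R) : Prop :=
  forall u : nat -> X,
    (forall e : R, 0 < e -> exists N : nat, forall m n : nat,
        (N <= m)%N -> (N <= n)%N -> mdist (u m) (u n) < e) ->
    exists l : X, forall e : R, 0 < e -> exists N : nat, forall n : nat,
        (N <= n)%N -> mdist l (u n) < e.

Definition causal (A B : Type) (V : (nat -> A) -> (nat -> B)) : Prop :=
  forall (z z' : nat -> A) (k : nat),
    (forall j : nat, (k <= j)%N -> z j = z' j) -> V z k = V z' k.

(* |w| < oo, where |w| = sup_{n>=1} (sup_t w_t / w_{t-n})^{1/n}. *)
Definition finite_rate (R : realType) (w : nat -> R) : Prop :=
  exists M : R, forall (n k : nat), (0 < n)%N ->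
    (w k / w (k + n)%N) `^ (n%:R)^-1 <= M.

Definition Xbar (R : realType) (X : metricType R) (w : nat -> R) (xs : X)
  : set (nat -> X) :=
  [set x | cvgn (series (fun k => w k * mdist (x k) xs))].

Definition dXbar (R : realType) (X : metricType R) (w : nat -> R)
  (x1 x2 : nat -> X) : R :=
  limn (series (fun k => w k * mdist (x1 k) (x2 k))).

Definition Fmap (X U : Type) (f : X -> U -> X) (x : nat -> X) (u : nat -> U)
  : nat -> X := fun k => f (x k.+1) (u k).

From HB Require Import structures.
From mathcomp Require Import all_boot all_order all_algebra.
From mathcomp Require Import all_classical all_reals all_analysis.
From mathcomp Require Import lra.
Import Order.TTheory GRing.Theory Num.Theory.
Import numFieldNormedType.Exports.
Set Implicit Arguments. Unset Strict Implicit. Unset Printing Implicit Defensive.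
Local Open Scope classical_set_scope.
Local Open Scope ring_scope.

(* With w_k <= M w_{k+1} (the case n = 1 of |w| < oo), the growth bound gives
   w_k d(f(x_{k+1}, u_k), x_* ) <= C w_k + C M w_{k+1} d(x_{k+1}, x_* ), a
   summable majorant, so F maps the weighted space into itself.  For continuity
   at (x, u), split the series of d(F(x,u), F(x',u')) at an index K: the tail is
   at most twice the tail of the majorant plus C M d(x, x'), and each of the
   finitely many head terms is small by continuity of f at (x_{k+1}, u_k), which
   is controlled by a pointwise neighbourhood of u and a small d(x, x'). *)

Section nonneg_series.
Variable R : realType.
Implicit Types u : R ^nat.

Lemma series_le_limn u : (forall k, 0 <= u k) -> cvgn (series u) ->
  forall n, series u n <= limn (series u).
Proof.
move=> u_ge0 cu; apply: nondecreasing_cvgn_le => //.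
by rewrite seriesEnat; apply: nondecreasing_series => k _ _; apply: u_ge0.
Qed.

Lemma limn_series_le u B : cvgn (series u) -> (forall n, series u n <= B) ->
  limn (series u) <= B.
Proof. by move=> cu uB; apply: limr_le => //; apply: nearW. Qed.

Lemma term_le_limn u : (forall k, 0 <= u k) -> cvgn (series u) ->
  forall k, u k <= limn (series u).
Proof.
move=> u_ge0 cu k; apply: le_trans (series_le_limn u_ge0 cu k.+1).
by rewrite seriesSr lerDr /series /= sumr_ge0.
Qed.

Lemma series_shift_le_limn u : (forall k, 0 <= u k) -> cvgn (series u) ->
  forall n, series (fun k => u k.+1) n <= limn (series u).
Proof.
move=> u_ge0 cu n; apply: le_trans (series_le_limn u_ge0 cu n.+1).
by rewrite /series /= big_nat_recl //= lerDr.
Qed.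

Lemma is_cvg_series_shift u : (forall k, 0 <= u k) -> cvgn (series u) ->
  cvgn (series (fun k => u k.+1)).
Proof.
move=> u_ge0 cu; apply: nondecreasing_is_cvgn.
  by rewrite seriesEnat; apply: nondecreasing_series => k _ _; apply: u_ge0.
by exists (limn (series u)) => _ [n _ <-]; apply: series_shift_le_limn.
Qed.

Lemma series_tail_small u : (forall k, 0 <= u k) -> cvgn (series u) ->
  forall eps, 0 < eps -> exists K, forall n, \sum_(K <= k < n) u k <= eps.
Proof.
move=> u_ge0 cu eps eps_gt0.
have /cvgrPdist_lt /(_ eps eps_gt0) [K _ HK] := cu.
exists K => n; case: (leqP n K) => [nK|/ltnW Kn]; first by rewrite big_geq ?ltW.
rewrite -sub_series_geq //; apply: le_trans (ltW (HK K (leqnn K))).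
by apply: le_trans (ler_norm _); rewrite lerB // series_le_limn.
Qed.

Lemma exists_pos_lbound_prefix (g : nat -> R) K : (forall k, 0 < g k) ->
  exists2 d : R, 0 < d & forall k, (k < K)%N -> d <= g k.
Proof.
move=> g_gt0; elim: K => [|K [d d_gt0 dg]]; first by exists 1.
exists (Num.min d (g K)); first by rewrite lt_min d_gt0 g_gt0.
move=> k; rewrite ltnS leq_eqVlt => /orP[/eqP->|kK].
  by rewrite ge_min lexx orbT.
by rewrite ge_min dg.
Qed.

End nonneg_series.

Lemma nbhs_ptws_prefix (U : topologicalType) (u : {ptws nat -> U})
    (B : nat -> set U) K :
  (forall k, nbhs (u k) (B k)) ->
  nbhs u [set v : {ptws nat -> U} | forall k, (k < K)%N -> B k (v k)].
Proof.
move=> uB; elim: K => [|K IH]; first by apply: filterE.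
have BK : nbhs u [set v : {ptws nat -> U} | B K (v K)].
  exact: (@proj_continuous nat (fun _ => U) K u (B K) (uB K)).
apply: filterS (filterI IH BK) => v [vB vBK] k.
by rewrite ltnS leq_eqVlt => /orP[/eqP->|/vB].
Qed.

Lemma continuous2_mdist (R : realType) (X Y : metricType R) (U : topologicalType)
    (g : X -> U -> Y) (a : X) (b : U) (e : R) :
  {for (a, b), continuous (fun p : X * U => g p.1 p.2)} -> 0 < e ->
  exists2 r : R, 0 < r & exists2 B : set U, nbhs b B &
    forall y v, mdist a y < r -> B v -> mdist (g a b) (g y v) < e.
Proof.
move=> g_cont e_gt0.
have [[A B] /= [/nbhs_ballP[r /= r_gt0 rA] bB] AB] :=
  g_cont _ (nbhsx_ballx (g a b) _ e_gt0).
exists r => //; exists B => // y v ay Bv.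
suff : ball (g a b) e (g y v) by rewrite ballEmdist.
by apply: (AB (y, v)); split => //=; apply: rA; rewrite ballEmdist.
Qed.

Lemma finite_rate_step (R : realType) (w : nat -> R) :
  (forall k, 0 < w k) -> finite_rate w ->
  exists2 M : R, 0 <= M & forall k, w k <= M * w k.+1.
Proof.
move=> w_gt0 [M wM].
have step k : w k <= M * w k.+1.
  have := wM 1%N k isT; rewrite invr1 powRr1; last by rewrite divr_ge0 ?ltW.
  by rewrite addn1 ler_pdivrMr.
exists M => //; have := lt_le_trans (w_gt0 0%N) (step 0%N).
by rewrite pmulr_lgt0 // => /ltW.
Qed.

Section weighted_state_map.
Variables (R : realType) (X : metricType R) (U : topologicalType).
Variables (w : nat -> R) (xs : X) (f : X -> U -> X) (M C : R).
Hypotheses (w_gt0 : forall k, 0 < w k) (w_sum1 : series w @ \oo --> (1 : R)).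
Hypotheses (M_ge0 : 0 <= M) (w_step : forall k, w k <= M * w k.+1).
Hypotheses (C_ge0 : 0 <= C)
  (f_growth : forall x u, mdist (f x u) xs <= C * (1 + mdist x xs)).

Let w_ge0 k : 0 <= w k. Proof. exact: ltW. Qed.

Let weighted_ge0 k (a b : X) : 0 <= w k * mdist a b.
Proof. exact: mulr_ge0 (w_ge0 k) (mdist_ge0 a b). Qed.

Lemma is_cvg_dXbar (x y : nat -> X) : Xbar w xs x -> Xbar w xs y ->
  cvgn (series (fun k => w k * mdist (x k) (y k))).
Proof.
move=> xX yX; apply: series_le_cvg (is_cvg_seriesD xX yX) => // k.
  exact: addr_ge0.
by rewrite fctE -mulrDr ler_wpM2l // (metric_sym (y k)) metric_triangle.
Qed.

Definition growth_bound (x : nat -> X) k :=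
  C * w k + C * M * (w k.+1 * mdist (x k.+1) xs).

Lemma growth_bound_ge0 x k : 0 <= growth_bound x k.
Proof. by apply: addr_ge0; apply: mulr_ge0 => //; apply: mulr_ge0. Qed.

Lemma is_cvg_growth_bound x : Xbar w xs x -> cvgn (series (growth_bound x)).
Proof.
move=> xX; have cw : cvgn (series w) := cvgP _ w_sum1.
have cb := is_cvg_series_shift (fun k => weighted_ge0 k (x k) xs) xX.
exact: is_cvg_seriesD (is_cvg_seriesZ (k := C) cw)
  (is_cvg_seriesZ (k := C * M) cb).
Qed.

Lemma Fmap_weight_le x u k : w k * mdist (Fmap f x u k) xs <= growth_bound x k.
Proof.
apply: le_trans (ler_wpM2l (w_ge0 k) (f_growth _ _)) _.
have := ler_wpM2l C_ge0 (ler_wpM2r (mdist_ge0 (x k.+1) xs) (w_step k)).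
rewrite /growth_bound; lra.
Qed.

Lemma Fmap_Xbar x u : Xbar w xs x -> Xbar w xs (Fmap f x u).
Proof.
move=> xX; apply: series_le_cvg (is_cvg_growth_bound xX) => // k.
  exact: growth_bound_ge0.
exact: Fmap_weight_le.
Qed.

Lemma Fmap_dist_weight_le x x' u u' k :
  w k * mdist (Fmap f x u k) (Fmap f x' u' k) <=
  2 * growth_bound x k + C * M * (w k.+1 * mdist (x k.+1) (x' k.+1)).
Proof.
have := Fmap_weight_le x u k; have := Fmap_weight_le x' u' k.
have FF : w k * mdist (Fmap f x u k) (Fmap f x' u' k) <=
    w k * mdist (Fmap f x u k) xs + w k * mdist (Fmap f x' u' k) xs.
  by rewrite -mulrDr ler_wpM2l // (metric_sym (Fmap f x' u' k)) metric_triangle.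
have xx' : w k.+1 * mdist (x' k.+1) xs <=
    w k.+1 * mdist (x k.+1) (x' k.+1) + w k.+1 * mdist (x k.+1) xs.
  by rewrite -mulrDr ler_wpM2l // (metric_sym (x k.+1) (x' k.+1)) metric_triangle.
have := ler_wpM2l (mulr_ge0 C_ge0 M_ge0) xx'.
rewrite /growth_bound; lra.
Qed.

Lemma dXbar_Fmap_le x x' u u' K eps t :
  Xbar w xs x -> Xbar w xs x' -> 0 <= eps ->
  (forall k, (k < K)%N -> mdist (Fmap f x u k) (Fmap f x' u' k) <= eps) ->
  (forall n, \sum_(K <= k < n) growth_bound x k <= t) ->
  dXbar w (Fmap f x u) (Fmap f x' u') <= eps + 2 * t + C * M * dXbar w x x'.
Proof.
move=> xX x'X eps_ge0 head tail.
have cF := is_cvg_dXbar (Fmap_Xbar (u := u) xX) (Fmap_Xbar (u := u') x'X).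
apply: limn_series_le cF _ => n.
have termwise k : w k * mdist (Fmap f x u k) (Fmap f x' u' k) <=
    eps * w k + 2 * (if (K <= k)%N then growth_bound x k else 0) +
    C * M * (w k.+1 * mdist (x k.+1) (x' k.+1)).
  have := mulr_ge0 (mulr_ge0 C_ge0 M_ge0) (weighted_ge0 k.+1 (x k.+1) (x' k.+1)).
  case: ltnP => [kK|_].
    by have := ler_wpM2l (w_ge0 k) (head k kK); lra.
  have := Fmap_dist_weight_le x x' u u' k; have := mulr_ge0 eps_ge0 (w_ge0 k).
  lra.
apply: le_trans (ler_sum _ (fun k _ => termwise k)) _.
rewrite !big_split /= -!mulr_sumr -big_mkcond /=.
have cw : cvgn (series w) := cvgP _ w_sum1.
have := series_le_limn w_ge0 cw n; rewrite (cvg_lim _ w_sum1) // => sum_w.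
have := series_shift_le_limn (fun k => weighted_ge0 k (x k) (x' k))
  (is_cvg_dXbar xX x'X) n.
rewrite -/(dXbar w x x') => sum_d.
have := ler_wpM2l eps_ge0 sum_w; have := ler_wpM2l (mulr_ge0 C_ge0 M_ge0) sum_d.
have := tail n; rewrite (big_nat_widenl _ _ _ _ _ (leq0n K)) /series /=; lra.
Qed.

Hypothesis f_cont : continuous (fun p : X * U => f p.1 p.2).

Lemma Fmap_continuous_at x (u : {ptws nat -> U}) e : Xbar w xs x -> 0 < e ->
  exists2 delta : R, 0 < delta &
  exists2 N : set {ptws nat -> U}, nbhs u N &
    forall x' (u' : {ptws nat -> U}), Xbar w xs x' ->
      dXbar w x x' < delta -> N u' -> dXbar w (Fmap f x u) (Fmap f x' u') < e.
Proof.
move=> xX e_gt0; pose eps := e / 4; have eps_gt0 : 0 < eps by rewrite divr_gt0.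
have local k : exists rB : R * set U, [/\ 0 < rB.1, nbhs (u k) rB.2 &
    forall y v, mdist (x k.+1) y < rB.1 -> rB.2 v ->
      mdist (f (x k.+1) (u k)) (f y v) < eps].
  have [r r_gt0 [B uB rB]] :=
    continuous2_mdist (@f_cont (x k.+1, u k)) eps_gt0.
  by exists (r, B).
have [rB rBP] := choice local.
have r_gt0 k : 0 < (rB k).1 by case: (rBP k).
have [K tail] :=
  series_tail_small (growth_bound_ge0 x) (is_cvg_growth_bound xX) eps_gt0.
have [d d_gt0 d_le] :=
  exists_pos_lbound_prefix K (fun k => mulr_gt0 (r_gt0 k) (w_gt0 k.+1)).
have CM1_gt0 : 0 < C * M + 1 by rewrite ltr_wpDl // mulr_ge0.
(* The first bound gives d(x_{k+1}, x'_{k+1}) < r_k for k < K, since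
   w_{k+1} d(x_{k+1}, x'_{k+1}) <= d(x, x'); the second gives
   C M d(x, x') < eps. *)
exists (Num.min d (eps / (C * M + 1))); first by rewrite lt_min d_gt0 divr_gt0.
exists [set v : {ptws nat -> U} | forall k, (k < K)%N -> (rB k).2 (v k)].
  by apply: (nbhs_ptws_prefix (B := fun k => (rB k).2)) => k; case: (rBP k).
move=> x' u' x'X; rewrite lt_min => /andP[dxx'_d dxx'_eps] Nu'.
have term_le :=
  term_le_limn (fun k => weighted_ge0 k (x k) (x' k)) (is_cvg_dXbar xX x'X).
have head k : (k < K)%N -> mdist (Fmap f x u k) (Fmap f x' u' k) <= eps.
  move=> kK; case: (rBP k) => _ _ /(_ (x' k.+1) (u' k)) close.
  apply/ltW/close/Nu'/kK.
  rewrite -(ltr_pM2r (w_gt0 k.+1)) mulrC.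
  exact: le_lt_trans (term_le k.+1) (lt_le_trans dxx'_d (d_le k kK)).
apply: le_lt_trans (dXbar_Fmap_le xX x'X (ltW eps_gt0) head tail) _.
have D_ge0 : 0 <= dXbar w x x'.
  by apply: le_trans (term_le 0%N); exact: weighted_ge0.
rewrite ltr_pdivlMr // in dxx'_eps.
move: dxx'_eps; rewrite /eps; lra.
Qed.

End weighted_state_map.

Theorem lemmaB2 (R : realType) (Z U : topologicalType) (X : metricType R)
  (HZ : polish R Z) (HU : polish R U)
  (HXsep : separable_space X) (HXcomp : mdist_complete X)
  (f : X -> U -> X) (Hf : continuous (fun p : X * U => f p.1 p.2))
  (V : {ptws nat -> Z} -> {ptws nat -> U}) (HVc : continuous V) (HVcaus : causal V)
  (w : nat -> R) (Hw01 : forall k, 0 < w k < 1)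
  (Hwmon : nondecreasing_seq w \/ nonincreasing_seq w)
  (Hwsum : series w @ \oo --> (1 : R)) (Hwrate : finite_rate w)
  (xs : X)
  (Hgrowth : exists C : R, 0 <= C /\
     forall (x : X) (u : U), mdist (f x u) xs <= C * (1 + mdist x xs)) :
  (forall (x : nat -> X) (u : nat -> U),
      Xbar w xs x -> range V u -> Xbar w xs (Fmap f x u)) /\
  (forall (x : nat -> X) (u : {ptws nat -> U}),
      Xbar w xs x -> range V u ->
      forall e : R, 0 < e ->
      exists2 delta : R, 0 < delta &
      exists2 N : set {ptws nat -> U}, nbhs u N &
        forall (x' : nat -> X) (u' : {ptws nat -> U}),
          Xbar w xs x' -> range V u' -> dXbar w x x' < delta -> N u' ->
          dXbar w (Fmap f x u) (Fmap f x' u') < e).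
Proof.
have [C [C_ge0 f_growth]] := Hgrowth.
have w_gt0 k : 0 < w k by case/andP: (Hw01 k).
have [M M_ge0 w_step] := finite_rate_step w_gt0 Hwrate.
split=> [x u xX _ | x u xX _ e e_gt0].
  exact: (Fmap_Xbar w_gt0 Hwsum M_ge0 w_step C_ge0 f_growth xX).
have [delta delta_gt0 [N uN close]] :=
  Fmap_continuous_at w_gt0 Hwsum M_ge0 w_step C_ge0 f_growth Hf u xX e_gt0.
by exists delta => //; exists N => // x' u' x'X _; apply: close.
Qed.
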